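(* Let $n\geq 3$, let $\mathrm{D}_{2n}=\langle a,b\mid a^n=b^2=1,\ b^{-1}ab=a^{-1}\rangle$, let $\Gamma=\mathrm{Cay}(\mathrm{D}_{2n},S)$ be a Cayley digraph of $\mathrm{D}_{2n}$, and let $A=\mathrm{Aut}(\Gamma)$. Suppose $A$ has a subgroup $R$ which is regular on the vertex set of $\Gamma$ and isomorphic to $\mathrm{D}_{2n}$. Then $R$ and $R(\mathrm{D}_{2n})$ are conjugate in $A$ if and only if the unique cyclic subgroup of order $n$ in $R$ is conjugate in $A$ to $\langle R(a)\rangle$.
   Context: For a group $G$ and a subset $S\subseteq G$ with $1\notin S$, the Cayley digraph $\mathrm{Cay}(G,S)$ has vertex set $G$ and arc set $\{(g,sg)\mid g\in G,\ s\in S\}$. For $g\in G$, $R(g)$ denotes the right multiplication $x\mapsto xg$ on $G$, which is an automorphism of $\mathrm{Cay}(G,S)$; $R(G)=\{R(g)\mid g\in G\}$ is the right regular representation. A subgroup of $\mathrm{Aut}(\Gamma)$ is regular if it acts transitively on the vertices with trivial vertex stabilizers. *)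

From mathcomp Require Import all_boot all_fingroup all_solvable.
Set Implicit Arguments. Unset Strict Implicit. Unset Printing Implicit Defensive.
Local Open Scope group_scope.

Section Cayley.
Variable gT : finGroupType.

Definition cay_arc (S : {set gT}) (x y : gT) : bool := y * x^-1 \in S.

Definition cay_aut (S : {set gT}) : {set {perm gT}} :=
  [set s : {perm gT} | [forall x, forall y, cay_arc S (s x) (s y) == cay_arc S x y]].

Definition rmul (g : gT) : {perm gT} := perm (mulIg g).

Definition rreg : {set {perm gT}} := [set rmul g | g in [set: gT]].

Definition regular (H : {set {perm gT}}) : Prop :=
  [transitive H, on [set: gT] | 'P] /\ forall x : gT, 'C_H[x | 'P] = 1.

Definition conj_in (A X Y : {set {perm gT}}) : Prop :=
  exists2 s, s \in A & X :^ s = Y.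
End Cayley.

From mathcomp Require Import all_boot all_fingroup all_solvable.
Set Implicit Arguments. Unset Strict Implicit. Unset Printing Implicit Defensive.
Local Open Scope group_scope.

(* In a group isomorphic to D_2n with n >= 3 there is a unique cyclic subgroup
   of order n, and every element outside it is an involution inverting it.
   If R^s = R(D_2n), then C^s and <R(a)> are both that subgroup of R(D_2n).
   Conversely, if C^s = <R(a)>, take tau in R^s with tau(1) = b: it lies outside
   <R(a)>, so it inverts R(a); hence tau R(b)^-1 centralises R(a) and fixes 1 and
   b, which meet every <R(a)>-orbit, so tau = R(b). Thus R^s contains R(a) and
   R(b), which generate R(D_2n), and equality follows by comparing orders. *)

Lemma perm1_cent_fix_orbit_reps (T : finType) (K : {group {perm T}})
    (X : {set T}) (s : {perm T}) :
    s \in 'C(K) -> {in X, forall x, s x = x} ->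
    (forall y, exists2 x, x \in X & y \in orbit 'P K x) ->
  s = 1.
Proof.
move=> cKs fixX coverX; apply/permP => y; rewrite perm1.
have [x xX /orbitP [k kK <-]] := coverX y.
by rewrite /aperm -permM -(centP cKs k kK) permM fixX.
Qed.

Section RightRegular.
Variable gT : finGroupType.

Lemma rmulE (g x : gT) : rmul g x = x * g.
Proof. by rewrite permE. Qed.

Lemma rmulM : {morph @rmul gT : g h / g * h}.
Proof. by move=> g h; apply/permP => x; rewrite permM !rmulE mulgA. Qed.

Canonical rmul_morphism := @Morphism gT _ [set: gT] (@rmul gT) (in2W rmulM).

Lemma injm_rmul : 'injm (@rmul gT).
Proof.
by apply/injmP => g h _ _ /(congr1 (fun p : {perm gT} => p 1)); rewrite !rmulE !mul1g.
Qed.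

Lemma rreg_morphim : rreg gT = @rmul gT @* [set: gT].
Proof. by rewrite morphimEdom. Qed.

End RightRegular.

Section Dihedral.
Variables (n : nat) (gT : finGroupType) (a b : gT).
Hypotheses (Hn : 3 <= n) (Ha : a ^+ n = 1) (Hb : b ^+ 2 = 1)
  (Hab : b^-1 * a * b = a^-1)
  (Hgen : <<[set a; b]>> = [set: gT]) (Hord : #|[set: gT]| = (2 * n)%N).

Lemma invg_b : b^-1 = b.
Proof. by apply/eqP; rewrite eq_invg_mul -expg2 Hb. Qed.

Lemma conj_ab : a ^ b = a^-1.
Proof. by rewrite conjgE mulgA Hab. Qed.

Lemma mul_cycle_ba : <[b]> * <[a]> = [set: gT].
Proof.
have nab : <[b]> \subset 'N(<[a]>).
  by rewrite cycle_subG inE -cycleJ conj_ab cycleV.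
apply/eqP; rewrite eqEsubset subsetT -norm_joinEl // -Hgen gen_subG.
by rewrite subUset !sub1set !mem_gen ?inE ?cycle_id ?orbT.
Qed.

Lemma dihedral_decomp x : exists i, x = a ^+ i \/ x = b * a ^+ i.
Proof.
have /mulsgP [_ _ /cycleP [k ->] /cycleP [i ->] ->] : x \in <[b]> * <[a]>.
  by rewrite mul_cycle_ba inE.
exists i; rewrite -(expg_mod _ Hb) modn2; case: (odd k) => /=.
  by right; rewrite expg1.
by left; rewrite expg0 mul1g.
Qed.

Lemma notin_cycle_a_decomp x : x \notin <[a]> -> exists i, x = b * a ^+ i.
Proof. by have [i [->|->]] := dihedral_decomp x; [rewrite mem_cycle | exists i]. Qed.

Lemma notin_cycle_a_invol x : x \notin <[a]> -> x ^+ 2 = 1.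
Proof.
case/notin_cycle_a_decomp => i ->.
by rewrite expg2 mulgA -{1}invg_b -(mulgA b^-1) -conjgE conjXg conj_ab expVgn mulVg.
Qed.

Lemma notin_cycle_a_inverts x y : x \notin <[a]> -> y \in <[a]> -> y ^ x = y^-1.
Proof.
case/notin_cycle_a_decomp => i -> /cycleP [j ->].
rewrite conjgM conjXg conj_ab -expVgn.
exact/conjg_fixP/commgP/commuteX2/commute_sym/commuteV.
Qed.

Lemma order_a : #[a] = n.
Proof.
have oa_n : #[a] %| n by rewrite order_dvdn Ha.
have ob_2 : #[b] <= 2 by rewrite dvdn_leq // order_dvdn Hb.
have : (2 * n <= 2 * #[a])%N.
  rewrite -Hord -mul_cycle_ba (@leq_trans (#|<[b]>| * #|<[a]>|)) //.
    by rewrite mul_cardG leq_pmulr ?cardG_gt0.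
  by rewrite -!orderE leq_mul2r ob_2 orbT.
rewrite leq_pmul2l // => le_n_oa.
by apply/eqP; rewrite eqn_leq le_n_oa dvdn_leq // (leq_trans _ Hn).
Qed.

Lemma notin_cycle_b : b \notin <[a]>.
Proof.
apply/negP => ab; have : [set: gT] \subset <[a]>.
  by rewrite -mul_cycle_ba mulG_subG subxx cycle_subG ab.
move/subset_leq_card; rewrite Hord -orderE order_a.
by rewrite -{2}[n]mul1n leq_pmul2r // (leq_trans _ Hn).
Qed.

Lemma dihedral_cyclic_eq (K : {group gT}) : cyclic K -> #|K| = n -> K :=: <[a]>.
Proof.
case/cyclicP => h -> oh.
have ha : h \in <[a]>.
  apply: contraLR Hn => /notin_cycle_a_invol h2; rewrite -leqNgt.
  by rewrite -oh -orderE dvdn_leq // order_dvdn h2.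
by apply/eqP; rewrite eqEcard cycle_subG ha oh -orderE order_a leqnn.
Qed.

Lemma eq_rmul_b (tau : {perm gT}) :
  tau 1 = b -> tau ^+ 2 = 1 -> rmul a ^ tau = (rmul a)^-1 -> tau = rmul b.
Proof.
move=> tau1 tau2 tau_a; have taub : tau b = 1 by rewrite -tau1 -permM -expg2 tau2 perm1.
apply/eqP; rewrite eq_mulgV1 -morphV ?inE // invg_b; apply/eqP.
apply: (@perm1_cent_fix_orbit_reps _ <[rmul a]> [set 1; b]).
- rewrite cent_cycle; apply/cent1P/commute_sym/commgP/conjg_fixP.
  by rewrite conjgM tau_a -morphV ?inE // -morphJ ?inE // conjVg conj_ab invgK.
- by move=> x /set2P [->|->]; rewrite permM /= rmulE ?tau1 ?taub -?expg2 ?Hb ?mul1g.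
move=> y; have [i [->|->]] := dihedral_decomp y; [exists 1 | exists b];
  rewrite ?inE ?eqxx ?orbT //; apply/orbitP; exists (rmul a ^+ i);
  by rewrite ?mem_cycle //= apermE -morphX ?inE //= rmulE ?mul1g.
Qed.

Lemma rreg_eq_gen (H : {group {perm gT}}) :
  #|H| = #|gT| -> rmul a \in H -> rmul b \in H -> H :=: rreg gT.
Proof.
move=> oH aH bH; apply/eqP; rewrite eq_sym eqEcard rreg_morphim.
rewrite card_injm ?injm_rmul ?oH ?cardsT // leqnn andbT.
have sTab : [set: gT] \subset <<[set a; b]>> by rewrite Hgen.
rewrite (subset_trans (morphimS _ sTab)) // morphim_gen ?subsetT // gen_subG.
by apply/subsetP => _ /morphimP [x _ /set2P [->|->] ->].
Qed.

Section Transport.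
Variables (rT : finGroupType) (H : {group rT}).

Lemma morphim_dihedral_cyclic (f : {morphism H >-> gT}) (K : {group rT}) :
  'injm f -> K \subset H -> cyclic K -> #|K| = n -> f @* K = <[a]>.
Proof.
move=> injf sKH cK oK.
by apply: dihedral_cyclic_eq; rewrite ?morphim_cyclic ?card_injm.
Qed.

Lemma isog_dihedral_cyclic_eq (K L : {group rT}) :
    H \isog [set: gT] -> K \subset H -> L \subset H ->
    cyclic K -> cyclic L -> #|K| = n -> #|L| = n ->
  K :=: L.
Proof.
case/isogP => f injf _ sKH sLH cK cL oK oL.
by apply: (injm_morphim_inj injf); rewrite ?morphim_dihedral_cyclic.
Qed.

Lemma isog_dihedral_reflection (K : {group rT}) t :
    H \isog [set: gT] -> K \subset H -> cyclic K -> #|K| = n ->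
    t \in H -> t \notin K ->
  t ^+ 2 = 1 /\ {in K, forall x, x ^ t = x^-1}.
Proof.
case/isogP => f injf _ sKH cK oK tH tK.
have fK := morphim_dihedral_cyclic injf sKH cK oK.
have ft : f t \notin <[a]>.
  apply: contra tK; rewrite -fK -cycle_subG -morphim_cycle //.
  by rewrite (injmSK injf) ?cycle_subG.
split; first by apply: (injm1 injf); rewrite ?groupX // morphX // notin_cycle_a_invol.
move=> x xK; have xH := subsetP sKH x xK.
apply: (injmP injf); rewrite ?groupJ ?groupV // morphJ // morphV //.
by rewrite notin_cycle_a_inverts // -fK mem_morphim.
Qed.

End Transport.

End Dihedral.

Theorem lemma4p1 (n : nat) (gT : finGroupType) (a b : gT)
  (Hn : 3 <= n)
  (Ha : a ^+ n = 1) (Hb : b ^+ 2 = 1) (Hab : b^-1 * a * b = a^-1)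
  (Hgen : <<[set a; b]>> = [set: gT]) (Hord : #|[set: gT]| = (2 * n)%N)
  (S : {set gT}) (HS : 1 \notin S)
  (R : {group {perm gT}})
  (HRA : R \subset cay_aut S) (HRreg : regular R)
  (HRiso : R \isog [set: gT])
  (C : {group {perm gT}}) (HCR : C \subset R) (HCcyc : cyclic C)
  (HCord : #|C| = n) :
  conj_in (cay_aut S) R (rreg gT) <->
  conj_in (cay_aut S) C <[rmul a]>.
Proof.
have isog_Rs s : (R :^ s)%G \isog [set: gT].
  exact: isog_trans (isog_symr (conj_isog R s)) HRiso.
have card_ra : #|<[rmul a]>| = n.
  by rewrite -orderE (order_injm (injm_rmul gT)) ?inE // (order_a Hn Ha Hb Hab Hgen Hord).
split=> -[s sA conj_s]; exists s => //.
  apply: (isog_dihedral_cyclic_eq Hn Ha Hb Hab Hgen Hord (isog_Rs s));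
    rewrite ?conjSg ?cyclicJ ?cycle_cyclic ?cardJg //.
  by rewrite cycle_subG /= conj_s rreg_morphim mem_morphim ?inE.
have [t tR tE] := atransP2 HRreg.1 (in_setT (s^-1 1)) (in_setT (s^-1 b)).
set tau := t ^ s.
have tau1 : tau 1 = b.
  by move: tE; rewrite /= apermE /tau conjgE !permM => <-; rewrite permKV.
have tau_out : tau \notin <[rmul a]>.
  apply/cycleP => -[i tau_i]; case/negP: (notin_cycle_b Hn Ha Hb Hab Hgen Hord).
  by rewrite -tau1 tau_i -morphX ?inE //= rmulE mul1g mem_cycle.
have sRs : <[rmul a]> \subset R :^ s by rewrite -conj_s conjSg.
have tauRs : tau \in R :^ s by rewrite memJ_conjg.
have [tau2 tau_inv] := isog_dihedral_reflection Hn Ha Hb Hab Hgen Hord (isog_Rs s)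
  sRs (cycle_cyclic _) card_ra tauRs tau_out.
have tau_b := eq_rmul_b Hb Hab Hgen tau1 tau2 (tau_inv _ (cycle_id _)).
apply: (rreg_eq_gen (H := (R :^ s)%G) Hgen); first by rewrite cardJg (card_isog HRiso) cardsT.
  by rewrite -cycle_subG.
by rewrite -tau_b.
Qed.
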